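(* Let $f:\{0,1\}^n\to\{0,1\}$ be a boolean function such that $f(x)=f(\bar x)$ for all $x\in\{0,1\}^n$, where $\bar x$ is the bitwise negation of $x$. Then $Q_E^{na}(f)\le n-1$.
   Context: Nonadaptive exact quantum query model: let $\mathcal H_{\rm in}$ have orthonormal basis $|0\rangle,\dots,|n\rangle$ and let the oracle $O_x$ act by $|i\rangle\mapsto(-1)^{x_i}|i\rangle$ with convention $x_0=0$. A nonadaptive quantum algorithm making $k$ queries consists of an input-independent state $|\psi\rangle\in\mathcal H_{\rm in}^{\otimes k}\otimes\mathcal H_{\rm work}$ (with $\mathcal H_{\rm work}$ a finite-dimensional workspace), to which $O_x^{\otimes k}\otimes I$ is applied, followed by an input-independent two-outcome measurement with outcomes labelled $0,1$. It computes $f$ exactly if for every $x$ the outcome is $f(x)$ with probability $1$. $Q_E^{na}(f)$ is the minimum such $k$. *)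

From HB Require Import structures.
From mathcomp Require Import all_boot all_order all_algebra.
Set Implicit Arguments. Unset Strict Implicit. Unset Printing Implicit Defensive.
Import Order.TTheory GRing.Theory Num.Theory.
Local Open Scope ring_scope.

Definition bnot (n : nat) (x : {ffun 'I_n -> bool}) : {ffun 'I_n -> bool} :=
  [ffun i => ~~ x i].

(* Oracle index set {0,...,n} = 'I_n.+1; convention x_0 = 0 and
   x_i (i >= 1) is the (i-1)-th bit of x (0-based ffun). *)
Definition xext (n : nat) (x : {ffun 'I_n -> bool}) (i : 'I_n.+1) : bool :=
  match unlift ord0 i with None => false | Some j => x j end.

(* Basis of H_in^{(x)k} (x) H_work, with dim H_work = d. *)
Definition qbasis (n k d : nat) : finType :=
  ({ffun 'I_k -> 'I_n.+1} * 'I_d)%type.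

Section QModel.
Variable C : numClosedFieldType.
Variables n k d : nat.
Local Notation T := (qbasis n k d).

Definition qdot (u v : T -> C) : C := \sum_(t : T) (u t)^* * v t.

Definition unit_state (psi : T -> C) : Prop := qdot psi psi = 1.

Definition qform (M : T -> T -> C) (v : T -> C) : C :=
  \sum_(a : T) \sum_(b : T) (v a)^* * M a b * v b.

Definition psd_op (M : T -> T -> C) : Prop := forall v : T -> C, 0 <= qform M v.

Definition two_outcome_povm (M : bool -> T -> T -> C) : Prop :=
  psd_op (M false) /\ psd_op (M true) /\
  forall a b : T, M false a b + M true a b = (a == b)%:R.

(* (O_x^{(x)k} (x) I) psi *)
Definition apply_oracle (x : {ffun 'I_n -> bool}) (psi : T -> C) : T -> C :=
  fun t => (\prod_(j < k) (if xext x (t.1 j) then -1 else 1)) * psi t.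

Definition outcome_prob (M : bool -> T -> T -> C) (b : bool) (v : T -> C) : C :=
  qform (M b) v.

Definition na_computes_exactly (f : {ffun 'I_n -> bool} -> bool)
  (psi : T -> C) (M : bool -> T -> T -> C) : Prop :=
  unit_state psi /\ two_outcome_povm M /\
  forall x, outcome_prob M (f x) (apply_oracle x psi) = 1.
End QModel.

Definition na_exact_alg (C : numClosedFieldType) (n : nat)
  (f : {ffun 'I_n -> bool} -> bool) (k : nat) : Prop :=
  exists (d : nat) (psi : qbasis n k d -> C) (M : bool -> qbasis n k d -> qbasis n k d -> C),
    na_computes_exactly f psi M.

Definition QEna_le (C : numClosedFieldType) (n : nat)
  (f : {ffun 'I_n -> bool} -> bool) (m : nat) : Prop :=
  exists k : nat, (k <= m)%N /\ na_exact_alg C f k.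

(* Write x = (x_0, ..., x_m) with n = m + 1.  Query register j < m is prepared
   in the uniform superposition of the two oracle indices carrying x_0 and
   x_(j+1); the oracle turns it into (-1)^x_0 |.> + (-1)^x_(j+1) |.> (up to
   normalisation), and a Hadamard rotation on these two indices maps it to a
   single basis vector that records the parity x_0 xor x_(j+1), up to a global
   sign.  Measuring every register in the rotated basis therefore yields the m
   parities exactly; they determine x up to global complementation, hence f(x). *)
From HB Require Import structures.
From mathcomp Require Import all_boot all_order all_algebra.
From mathcomp Require Import ring.
Import Order.TTheory GRing.Theory Num.Theory.
Local Open Scope ring_scope.
Set Implicit Arguments. Unset Strict Implicit.

Section Amplitudes.
Variable C : numClosedFieldType.

Definition hh : C := sqrtC (2^-1).

Lemma hh_conj : hh^* = hh.
Proof. by apply/conj_Creal/ger0_real; rewrite sqrtC_ge0 invr_ge0 ler0n. Qed.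

Lemma hh_sqr : hh * hh = 2^-1.
Proof. by rewrite -expr2 sqrtCK. Qed.

Lemma half_add_half : 2^-1 + 2^-1 = 1 :> C.
Proof. by rewrite [RHS](splitr 1) div1r. Qed.

Definition sgb (b : bool) : C := if b then -1 else 1.

Lemma sgb_norm b : (sgb b)^* * sgb b = 1.
Proof. by case: b; rewrite /sgb ?rmorphN1 ?rmorph1 ?mulrNN mulr1. Qed.

Lemma half_sgb_add a b : 2^-1 * (sgb a + sgb b) = (a == b)%:R * sgb a.
Proof.
by case: a b => [] []; rewrite /sgb /= ?mulr1n ?mulr0n; field.
Qed.

Lemma half_sgb_sub a b : 2^-1 * (sgb a - sgb b) = (a != b)%:R * sgb a.
Proof.
by case: a b => [] []; rewrite /sgb /= ?mulr1n ?mulr0n; field.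
Qed.

Section TwoLevel.
Variables (I : finType) (p q : I).
Hypothesis p_neq_q : p != q.

Definition inpair (r : I) : bool := (r == p) || (r == q).

Definition hadamard (r e : I) : C :=
  if inpair r && inpair e then (if (r == q) && (e == q) then - hh else hh)
  else (r == e)%:R.

Definition plus_state (r : I) : C := if inpair r then hh else 0.

Lemma inpair_p : inpair p. Proof. by rewrite /inpair eqxx. Qed.
Lemma inpair_q : inpair q. Proof. by rewrite /inpair eqxx orbT. Qed.

Lemma inpairP r : inpair r -> r = p \/ r = q.
Proof. by case/orP => /eqP->; [left | right]. Qed.

Lemma sum_on_pair (F : I -> C) :
  (forall r, ~~ inpair r -> F r = 0) -> \sum_r F r = F p + F q.
Proof.
move=> F0; rewrite (bigD1 p) // (bigD1 q) 1?eq_sym //= big1 ?addr0 //.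
by move=> r /andP[r_p r_q]; apply: F0; rewrite /inpair negb_or r_p r_q.
Qed.

Lemma hadamard_pp : hadamard p p = hh.
Proof. by rewrite /hadamard inpair_p eqxx (negbTE p_neq_q). Qed.
Lemma hadamard_pq : hadamard p q = hh.
Proof. by rewrite /hadamard inpair_p inpair_q (negbTE p_neq_q). Qed.
Lemma hadamard_qp : hadamard q p = hh.
Proof. by rewrite /hadamard inpair_p inpair_q [q == p]eq_sym (negbTE p_neq_q) andbF. Qed.
Lemma hadamard_qq : hadamard q q = - hh.
Proof. by rewrite /hadamard inpair_q eqxx. Qed.

Lemma hadamard_outl r e : ~~ inpair r -> hadamard r e = (r == e)%:R.
Proof. by rewrite /hadamard => /negbTE->. Qed.

Lemma hadamard_outr r e : ~~ inpair e -> hadamard r e = (r == e)%:R.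
Proof. by rewrite /hadamard => /negbTE->; rewrite andbF. Qed.

Lemma hadamard_cross r e : inpair r -> ~~ inpair e -> hadamard r e = 0.
Proof.
move=> r_in e_out; rewrite hadamard_outr //; case: eqP => // req.
by move: e_out; rewrite -req r_in.
Qed.

Lemma hadamard_conj r e : (hadamard r e)^* = hadamard r e.
Proof.
rewrite /hadamard; case: ifP => _; last by rewrite rmorph_nat.
by case: ifP => _; rewrite ?rmorphN /= hh_conj.
Qed.

Lemma hadamard_orthonormal e e' :
  \sum_r (hadamard r e)^* * hadamard r e' = (e == e')%:R.
Proof.
have [e_in | e_out] := boolP (inpair e); last first.
  rewrite (bigD1 e) //= big1 ?addr0; last first.
    by move=> r /negbTE re; rewrite hadamard_outr // re rmorph0 mul0r.
  by rewrite !hadamard_outl // eqxx rmorph1 mul1r.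
rewrite sum_on_pair => [|r r_out]; last first.
  rewrite (hadamard_outl _ r_out) (negbTE (contraNneq _ r_out)) ?rmorph0 ?mul0r //.
  by move=> ->.
rewrite !hadamard_conj.
have [e'_in | e'_out] := boolP (inpair e'); last first.
  rewrite !(hadamard_cross _ e'_out) ?inpair_p ?inpair_q // !mulr0 addr0.
  by case: eqP e'_out => // <-; rewrite e_in.
have pq := negbTE p_neq_q; have qp : (q == p) = false by rewrite eq_sym.
case/inpairP: e_in => ->; case/inpairP: e'_in => ->;
  rewrite ?hadamard_pp ?hadamard_pq ?hadamard_qp ?hadamard_qq ?eqxx ?pq ?qp
    ?mulrN ?mulNr ?opprK hh_sqr ?subrr ?half_add_half //.
Qed.

Lemma plus_state_unit : \sum_r (plus_state r)^* * plus_state r = 1.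
Proof.
rewrite sum_on_pair => [|r /negbTE r_out]; last by rewrite /plus_state r_out mulr0.
by rewrite /plus_state inpair_p inpair_q hh_conj hh_sqr half_add_half.
Qed.

(* The basis vector reached when the phases (-1)^b are applied to the plus
   state and the rotation is undone: p iff the two phases agree. *)
Definition parity_target (b : I -> bool) : I := if b p == b q then p else q.

Lemma hadamard_phase_plus (b : I -> bool) s :
  \sum_r hadamard s r * (sgb (b r) * plus_state r) =
  sgb (b p) * (s == parity_target b)%:R.
Proof.
rewrite sum_on_pair => [|r /negbTE r_out]; last by rewrite /plus_state r_out !mulr0.
rewrite /plus_state inpair_p inpair_q /parity_target.
have qp : (q == p) = false by rewrite eq_sym (negbTE p_neq_q).
have [s_in | s_out] := boolP (inpair s); last first.
  rewrite (hadamard_outl p s_out) (hadamard_outl q s_out).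
  move: s_out; rewrite /inpair negb_or => /andP[/negbTE sp /negbTE sq].
  by rewrite sp sq !mul0r addr0; case: ifP; rewrite ?sp ?sq mulr0.
case/inpairP: s_in => ->;
  rewrite ?hadamard_pp ?hadamard_pq ?hadamard_qp ?hadamard_qq ?mulNr
    !(mulrCA hh) hh_sqr -?mulrDl -?mulrBl mulrC ?half_sgb_add ?half_sgb_sub mulrC;
  by case: (b p == b q); rewrite /= ?eqxx ?qp ?(negbTE p_neq_q).
Qed.
End TwoLevel.

Section Tensor.
Variables (I : finType) (k : nat).

Lemma prod_delta (a b : {ffun 'I_k -> I}) :
  \prod_j ((a j == b j)%:R : C) = (a == b)%:R.
Proof.
have [-> | neq] := eqVneq a b; first by rewrite big1 // => j _; rewrite eqxx.
have /existsP [j aj_neq] : [exists j, a j != b j].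
  apply: contraNT neq => /existsPn eq_ab; apply/eqP/ffunP => j.
  by apply/eqP; rewrite -[_ == _]negbK eq_ab.
by rewrite (bigD1 j) //= (negbTE aj_neq) mul0r.
Qed.

Definition tensor (U : 'I_k -> I -> I -> C) (z a : {ffun 'I_k -> I}) : C :=
  \prod_j U j (z j) (a j).

Lemma tensor_orthonormal (U : 'I_k -> I -> I -> C) :
  (forall j e e', \sum_r (U j r e)^* * U j r e' = (e == e')%:R) ->
  forall a b, \sum_z (tensor U z a)^* * tensor U z b = (a == b)%:R.
Proof.
move=> U_on a b; rewrite /tensor -prod_delta.
under [LHS]eq_bigr do rewrite rmorph_prod -big_split /=.
rewrite -(bigA_distr_bigA (fun j r => (U j r (a j))^* * U j r (b j))).
by apply: eq_bigr => j _; rewrite U_on.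
Qed.
End Tensor.

Lemma sum_qbasis1_prod (n k : nat) (F : 'I_k -> 'I_n.+1 -> C) :
  \sum_(a : qbasis n k 1) \prod_j F j (a.1 j) = \prod_j \sum_r F j r.
Proof.
pose G (g : {ffun 'I_k -> 'I_n.+1}) (_ : 'I_1) := \prod_j F j (g j).
rewrite /qbasis -(pair_bigA _ G) /=.
by rewrite bigA_distr_bigA; apply: eq_bigr => g _; rewrite big_ord1.
Qed.

(* <v| sum_z c_z |W_z><W_z| |v> = sum_z c_z |<W_z|v>|^2 (rows W_z stored
   conjugated, as in the measurement below). *)
Lemma qform_rows (T Z : finType) (c : Z -> C) (W : Z -> T -> C) (v : T -> C) :
  \sum_a \sum_b (v a)^* * (\sum_z c z * ((W z a)^* * W z b)) * v b =
  \sum_z c z * ((\sum_a W z a * v a)^* * (\sum_b W z b * v b)).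
Proof.
rewrite [RHS](eq_bigr (fun z => \sum_a \sum_b c z * ((W z a * v a)^* * (W z b * v b))));
  last first.
  move=> z _; rewrite rmorph_sum mulr_suml mulr_sumr; apply: eq_bigr => a _.
  by rewrite !mulr_sumr.
rewrite [RHS]exchange_big; apply: eq_bigr => a _.
rewrite [RHS]exchange_big; apply: eq_bigr => b _.
rewrite mulr_sumr mulr_suml; apply: eq_bigr => z _; rewrite rmorphM; ring.
Qed.

Section LabelledBasis.
Variables (n k d : nat) (Z : finType).
Variables (W : Z -> qbasis n k d -> C) (lab : Z -> bool).

Definition amplitude (z : Z) (v : qbasis n k d -> C) : C := \sum_a W z a * v a.

Definition label_povm (b : bool) (a a' : qbasis n k d) : C :=
  \sum_z (lab z == b)%:R * ((W z a)^* * W z a').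

Lemma qform_label_povm b v :
  qform (label_povm b) v =
  \sum_z (lab z == b)%:R * ((amplitude z v)^* * amplitude z v).
Proof. exact: qform_rows. Qed.

Lemma label_povm_is_povm :
  (forall a a', \sum_z (W z a)^* * W z a' = (a == a')%:R) ->
  two_outcome_povm label_povm.
Proof.
move=> W_on.
have psd b : psd_op (label_povm b).
  move=> v; rewrite qform_label_povm; apply: sumr_ge0 => z _.
  by rewrite mulr_ge0 ?ler0n // mulrC mul_conjC_ge0.
split; [exact: psd | split; first exact: psd].
move=> a a'; rewrite -big_split -W_on /=; apply: eq_bigr => z _.
by rewrite -mulrDl; case: (lab z); rewrite /= ?add0r ?addr0 mul1r.
Qed.

Lemma label_povm_prob b v z0 :
  (forall z, (amplitude z v)^* * amplitude z v = (z == z0)%:R) ->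
  outcome_prob label_povm b v = (lab z0 == b)%:R.
Proof.
move=> v_z0; rewrite /outcome_prob qform_label_povm.
under eq_bigr do rewrite v_z0.
rewrite (bigD1 z0) //= eqxx mulr1 big1 ?addr0 // => z /negbTE->.
by rewrite mulr0.
Qed.
End LabelledBasis.

Section ComplementInvariant.
Variables (m : nat) (f : {ffun 'I_m.+1 -> bool} -> bool).
Hypothesis f_bnot : forall x, f x = f (bnot x).

Local Notation T := (qbasis m.+1 m 1).
Local Notation Z := {ffun 'I_m -> 'I_m.+2}.

Definition idx0 : 'I_m.+2 := lift ord0 ord0.
Definition idxS (j : 'I_m) : 'I_m.+2 := lift ord0 (lift ord0 j).

Lemma idx0_neq_idxS j : idx0 != idxS j.
Proof. by rewrite (inj_eq (@lift_inj _ _)) neq_lift. Qed.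

Lemma xext_idx0 x : xext x idx0 = x ord0.
Proof. by rewrite /xext liftK. Qed.

Lemma xext_idxS x j : xext x (idxS j) = x (lift ord0 j).
Proof. by rewrite /xext liftK. Qed.

Definition init_state (a : T) : C := \prod_j plus_state idx0 (idxS j) (a.1 j).

Definition meas_basis (z : Z) (a : T) : C :=
  tensor (fun j => hadamard idx0 (idxS j)) z a.1.

(* The bits x_(j+1) xor x_0 read off an outcome; the first bit is set to 0. *)
Definition decode (z : Z) : {ffun 'I_m.+1 -> bool} :=
  [ffun i => if unlift ord0 i is Some j then z j == idxS j else false].

Definition algorithm : bool -> T -> T -> C :=
  label_povm meas_basis (fun z => f (decode z)).

Lemma init_state_unit : unit_state init_state.
Proof.
rewrite /unit_state /qdot.
under eq_bigr do rewrite rmorph_prod -big_split /=.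
rewrite (sum_qbasis1_prod (fun j r =>
  (plus_state idx0 (idxS j) r)^* * plus_state idx0 (idxS j) r)).
apply: big1 => j _.
exact/plus_state_unit/idx0_neq_idxS.
Qed.

Lemma meas_basis_orthonormal a a' :
  \sum_z (meas_basis z a)^* * meas_basis z a' = (a == a')%:R.
Proof.
rewrite /meas_basis.
rewrite (tensor_orthonormal (fun j => hadamard_orthonormal (idx0_neq_idxS j))).
by case: a a' => [a1 i] [a1' i']; rewrite xpair_eqE (ord1 i) (ord1 i') eqxx andbT.
Qed.

Section Input.
Variable x : {ffun 'I_m.+1 -> bool}.

Definition outcome : Z := [ffun j => parity_target idx0 (idxS j) (xext x)].

Lemma amplitude_oracle z :
  amplitude meas_basis z (apply_oracle x init_state) =
  \prod_j (sgb (x ord0) * (z j == outcome j)%:R).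
Proof.
rewrite /amplitude.
pose F j r :=
  hadamard idx0 (idxS j) (z j) r * (sgb (xext x r) * plus_state idx0 (idxS j) r).
have split_term a : meas_basis z a * apply_oracle x init_state a = \prod_j F j (a.1 j).
  by rewrite /apply_oracle /init_state /meas_basis /tensor -!big_split.
rewrite (eq_bigr _ (fun a _ => split_term a)) sum_qbasis1_prod; apply: eq_bigr => j _.
by rewrite /F (hadamard_phase_plus (idx0_neq_idxS j)) xext_idx0 ffunE.
Qed.

Lemma amplitude_oracle_norm z :
  (amplitude meas_basis z (apply_oracle x init_state))^* *
  amplitude meas_basis z (apply_oracle x init_state) = (z == outcome)%:R.
Proof.
rewrite amplitude_oracle rmorph_prod -big_split -prod_delta /=.
by apply: eq_bigr => j _; rewrite rmorphM rmorph_nat mulrACA sgb_norm mul1r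
  -natrM mulnb andbb.
Qed.

Lemma decode_outcome : decode outcome = if x ord0 then bnot x else x.
Proof.
apply/ffunP => i; rewrite /decode ffunE.
case: unliftP => [j|] ->; rewrite ?ffunE /parity_target ?xext_idx0 ?xext_idxS.
  have pq := negbTE (idx0_neq_idxS j).
  by case: (x ord0) => /=; rewrite ?ffunE; case: (x (lift ord0 j)); rewrite /= ?eqxx ?pq.
by case E: (x ord0) => /=; rewrite ?ffunE E.
Qed.

Lemma algorithm_correct :
  outcome_prob algorithm (f x) (apply_oracle x init_state) = 1.
Proof.
rewrite (label_povm_prob _ _ amplitude_oracle_norm) decode_outcome.
by case: (x ord0); rewrite -?f_bnot eqxx.
Qed.
End Input.
End ComplementInvariant.
End Amplitudes.

Theorem corollary7p4 (C : numClosedFieldType) (n : nat) (hn : (1 <= n)%N)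
  (f : {ffun 'I_n -> bool} -> bool)
  (hf : forall x : {ffun 'I_n -> bool}, f x = f (bnot x)) :
  QEna_le C f (n - 1).
Proof.
case: n hn f hf => [//|m] _ f hf.
exists m; split; first by rewrite subn1.
exists 1%N, (@init_state C m), (algorithm C f).
split; first exact: init_state_unit.
split; first exact/label_povm_is_povm/meas_basis_orthonormal.
exact: algorithm_correct.
Qed.
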